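(* Let $M=(E,\mathcal{I})$ be a matroid, $m,\Delta$ positive integers, $W:E\to\{-\Delta,\dots,\Delta\}^m$ weight vectors and $\mu\ge0$. Let $A,B\in\mathcal{I}$ be disjoint with $|A|=|B|=k$ and $\|W(A)-W(B)\|_1\le\mu$, and let $d\in\mathbb{Z}^m$. Then there exist unicolor sets $A'\subseteq A$, $B'\subseteq B$ of equal cardinality such that (i) $(A\setminus A')\cup B'\in\mathcal{I}$, (ii) $|A'|=|B'|\ge\dfrac{k-\|d\|_1\mu}{(2\|d\|_1\Delta+1)^2(2\Delta+1)^{2m}}$, and (iii) $d^{\mathsf T}W(a)\ge d^{\mathsf T}W(b)$ for each $a\in A'$ and $b\in B'$.
   Context: $W(S)=\sum_{e\in S}W(e)$. A set $S\subseteq E$ is unicolor if $W(a)=W(b)$ for all $a,b\in S$. *)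

From HB Require Import structures.
From mathcomp Require Import all_boot all_order all_algebra.
Set Implicit Arguments. Unset Strict Implicit. Unset Printing Implicit Defensive.
Import Order.TTheory GRing.Theory Num.Theory.
Local Open Scope ring_scope.

Definition is_matroid (E : finType) (indep : pred {set E}) : Prop :=
  [/\ indep set0,
      (forall A B : {set E}, indep B -> A \subset B -> indep A) &
      (forall A B : {set E}, indep A -> indep B -> (#|A| < #|B|)%N ->
          exists2 x, x \in B :\: A & indep (x |: A))].

Definition wsum (E : finType) (m : nat) (W : E -> 'rV[int]_m) (S : {set E})
  : 'rV[int]_m := \sum_(e in S) W e.

Definition norm1 (m : nat) (v : 'rV[int]_m) : int := \sum_(i < m) `|v 0 i|.

Definition dotv (m : nat) (d x : 'rV[int]_m) : int := \sum_(i < m) d 0 i * x 0 i.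

Definition unicolor (E : finType) (m : nat) (W : E -> 'rV[int]_m) (S : {set E})
  : Prop := forall a b, a \in S -> b \in S -> W a = W b.

From HB Require Import structures.
From mathcomp Require Import all_boot all_order all_algebra.
From mathcomp Require Import zify ring.
Import Order.TTheory GRing.Theory Num.Theory.

(* Sweep a threshold t over the 2 |d|_1 Delta + 1 possible values of d^T W and
   compare A_t = {a in A | d^T W(a) >= t} with B_t = {b in B | d^T W(b) <= t}.
   In the matroid truncated at rank k, the exchange rank
   rho(C, X) = r((A \ C) u X) - |A \ C| counts how many elements of X can
   replace elements of C in A; it is subadditive in both C and X by
   submodularity of r, and |B_t| - |A \ A_t| <= rho(A_t, B_t).  Splitting A_t
   and B_t into the (2 Delta + 1)^m weight classes, one pair of classes carries
   a share 1/(2 Delta + 1)^(2m), and an exchange realizing rho for it is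
   unicolor and ordered by d^T W.  Summed over all thresholds,
   |B_t| - |A \ A_t| adds up to k + d^T W(A) - d^T W(B) >= k - |d|_1 mu, so
   some threshold carries a share 1/(2 |d|_1 Delta + 1) of it: the bound holds
   even with the first factor of the denominator not squared. *)

Set Implicit Arguments.
Unset Strict Implicit.
Unset Printing Implicit Defensive.

Section MatroidRank.

Variables (E : finType) (indep : pred {set E}).
Hypothesis matroidE : is_matroid indep.

Lemma indep_subset (X Y : {set E}) : indep Y -> X \subset Y -> indep X.
Proof. by case: matroidE => _ sub_closed _; apply: sub_closed. Qed.

Definition rank (X : {set E}) : nat :=
  \max_(I : {set E} | (I \subset X) && indep I) #|I|.

Lemma card_le_rank (I X : {set E}) : indep I -> I \subset X -> #|I| <= rank X.
Proof.
by move=> iI sIX; apply: (@leq_bigmax_cond _ _ (fun J : {set E} => #|J|) I); rewrite sIX.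
Qed.

Lemma rank_witness (X : {set E}) :
  exists I : {set E}, [/\ I \subset X, indep I & #|I| = rank X].
Proof.
have indep0 : (set0 \subset X) && indep set0 by rewrite sub0set; case: matroidE.
have [I /andP[sIX iI] I_max] :=
  @arg_maxnP _ set0 (fun J => (J \subset X) && indep J) (fun J => #|J|) indep0.
exists I; split=> //; apply/eqP; rewrite eqn_leq card_le_rank //=.
by apply/bigmax_leqP => J /I_max.
Qed.

Lemma rank_augment (Y Z : {set E}) : indep Y -> Y \subset Z ->
  exists Y' : {set E}, [/\ Y \subset Y', Y' \subset Z, indep Y' & #|Y'| = rank Z].
Proof.
have [I [sIZ iI cardI]] := rank_witness Z.
move gapE : (rank Z - #|Y|) => n.
elim: n Y gapE => [|n IHn] Y gapY iY sYZ.
  by exists Y; split=> //; have := card_le_rank iY sYZ; lia.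
have ltYI : #|Y| < #|I| by lia.
case: matroidE => _ _ /(_ Y I iY iI ltYI) [x /setDP[xI xNY] ixY].
have [||| Y' [sxYY' sY'Z iY' cardY']] := IHn (x |: Y).
- by rewrite cardsU1 xNY; lia.
- done.
- by rewrite subUset sub1set (subsetP sIZ).
by exists Y'; split=> //; apply: subset_trans sxYY'; apply: subsetUr.
Qed.

Lemma rank_submod (X Y : {set E}) :
  rank (X :|: Y) + rank (X :&: Y) <= rank X + rank Y.
Proof.
have [I [sI iI <-]] := rank_witness (X :&: Y).
have sIXY : I \subset X :|: Y.
  by apply: subset_trans (subsetUl X Y); apply: subset_trans sI (subsetIl X Y).
have [J [sIJ sJ iJ <-]] := rank_augment iI sIXY.
have iJ_sub Z : indep (J :&: Z) by apply: indep_subset iJ (subsetIl J Z).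
have JX_le : #|J :&: X| <= rank X by apply: card_le_rank; rewrite ?subsetIr.
have JY_le : #|J :&: Y| <= rank Y by apply: card_le_rank; rewrite ?subsetIr.
have JXY : (J :&: X) :|: (J :&: Y) = J by rewrite -setIUr; apply/setIidPl.
have I_le : #|I| <= #|(J :&: X) :&: (J :&: Y)|.
  by apply: subset_leq_card; rewrite setIACA setIid subsetI sIJ.
by have := cardsUI (J :&: X) (J :&: Y); rewrite JXY; lia.
Qed.

End MatroidRank.

Lemma truncation_matroid (E : finType) (indep : pred {set E}) (k : nat) :
  is_matroid indep -> is_matroid [pred X : {set E} | indep X && (#|X| <= k)].
Proof.
case=> indep0 sub_closed augment; split=> /=.
- by rewrite indep0 cards0.
- move=> X Y /andP[iY cardY] sXY; rewrite (sub_closed _ _ iY sXY) /=.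
  exact: leq_trans (subset_leq_card sXY) cardY.
- move=> X Y /andP[iX _] /andP[iY cardY] ltXY.
  have [x xYX ixX] := augment X Y iX iY ltXY; exists x; rewrite // ixX /=.
  by move: xYX; rewrite inE cardsU1 => /andP[/negPf-> _]; apply: leq_trans cardY.
Qed.

Section ExchangeRank.

Variables (E : finType) (indep : pred {set E}) (A : {set E}) (k : nat).
Hypothesis matroidE : is_matroid indep.
Hypothesis indep_card_le : forall I, indep I -> #|I| <= k.
Hypotheses (indepA : indep A) (cardA : #|A| = k).

Implicit Types C X : {set E}.

Local Notation rank := (rank indep).

Lemma rank_supset_basis X : A \subset X -> rank X = k.
Proof.
move=> sAX; apply/eqP; rewrite eqn_leq -{2}cardA card_le_rank // andbT.
by have [I [_ iI <-]] := rank_witness matroidE X; apply: indep_card_le.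
Qed.

Definition exchange_rank C X : nat := rank ((A :\: C) :|: X) - #|A :\: C|.

Lemma card_le_rank_kept C X : #|A :\: C| <= rank ((A :\: C) :|: X).
Proof.
apply: card_le_rank; last exact: subsetUl.
exact: (indep_subset matroidE indepA (subsetDl A C)).
Qed.

Lemma exchange_rank_subaddr C X1 X2 :
  exchange_rank C (X1 :|: X2) <= exchange_rank C X1 + exchange_rank C X2.
Proof.
rewrite /exchange_rank.
have := rank_submod matroidE ((A :\: C) :|: X1) ((A :\: C) :|: X2).
rewrite setUACA setUid -setUIr.
have := card_le_rank_kept C X1; have := card_le_rank_kept C X2.
have := card_le_rank_kept C (X1 :|: X2); have := card_le_rank_kept C (X1 :&: X2).
lia.
Qed.

Lemma exchange_rank_subaddl C1 C2 X :
  exchange_rank (C1 :|: C2) X <= exchange_rank C1 X + exchange_rank C2 X.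
Proof.
rewrite /exchange_rank.
have := rank_submod matroidE ((A :\: C1) :|: X) ((A :\: C2) :|: X).
rewrite -setUUl -setUIl -setDIr -setDUr.
have := card_le_rank_kept C1 X; have := card_le_rank_kept C2 X.
have := card_le_rank_kept (C1 :|: C2) X; have := card_le_rank_kept (C1 :&: C2) X.
have := cardsUI (A :\: C1) (A :\: C2); rewrite -setDIr -setDUr; lia.
Qed.

Lemma exchange_rank0l X : exchange_rank set0 X = 0.
Proof. by rewrite /exchange_rank setD0 rank_supset_basis ?subsetUl // cardA subnn. Qed.

Lemma exchange_rank0r C : exchange_rank C set0 = 0.
Proof.
apply/eqP; rewrite subn_eq0 setU0.
by have [I [sI _ <-]] := rank_witness matroidE (A :\: C); apply: subset_leq_card.
Qed.

Lemma exchange_rank_bigcupr (I : finType) C (X : I -> {set E}) :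
  exchange_rank C (\bigcup_i X i) <= \sum_i exchange_rank C (X i).
Proof.
elim/big_rec2: _ => [|i U s _ IH]; first by rewrite exchange_rank0r.
by apply: leq_trans (exchange_rank_subaddr _ _ _) _; rewrite leq_add2l.
Qed.

Lemma exchange_rank_bigcupl (I : finType) (C : I -> {set E}) X :
  exchange_rank (\bigcup_i C i) X <= \sum_i exchange_rank (C i) X.
Proof.
elim/big_rec2: _ => [|i U s _ IH]; first by rewrite exchange_rank0l.
by apply: leq_trans (exchange_rank_subaddl _ _ _) _; rewrite leq_add2l.
Qed.

Lemma card_le_exchange_rank C X :
  indep X -> #|X| <= exchange_rank C X + #|A :\: C|.
Proof.
by move=> iX; rewrite subnK ?card_le_rank_kept // card_le_rank ?subsetUr.
Qed.

Lemma exchange_rank_realized C X : [disjoint A & X] ->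
  exists A' B' : {set E},
    [/\ A' \subset A :&: C, B' \subset X, #|A'| = #|B'|,
        exchange_rank C X <= #|B'| & indep ((A :\: A') :|: B')].
Proof.
(* Extend A :\: C inside X as far as possible, complete it to a basis with
   elements of A, and swap the elements of A left out for those taken from X. *)
move=> disjAX; set P := A :\: C.
have iP : indep P := indep_subset matroidE indepA (subsetDl A C).
have [Y1 [sPY1 sY1 iY1 cardY1]] := rank_augment matroidE iP (subsetUl P X).
have [Y2 [sY1Y2 sY2 iY2]] := rank_augment matroidE iY1 (subsetUl Y1 A).
rewrite rank_supset_basis ?subsetUr // => cardY2.
have Y1A_sub : Y1 :&: A \subset P.
  apply/subsetP => x /setIP[/(subsetP sY1) + xA]; rewrite inE.
  by rewrite (disjointFr disjAX xA) orbF.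
exists (A :\: Y2), (Y2 :\: A); split.
- rewrite subsetI subsetDl; apply/subsetP => x /setDP[xA xNY2].
  apply: contraNT xNY2 => xNC; apply/(subsetP sY1Y2)/(subsetP sPY1).
  by rewrite inE xNC.
- apply/subsetP => x /setDP[/(subsetP sY2) + xNA]; rewrite inE (negPf xNA) orbF.
  by move/(subsetP sY1); rewrite !inE (negPf xNA) andbF.
- apply/eqP; rewrite -(eqn_add2l #|A :&: Y2|) cardsID setIC cardsID.
  by rewrite cardA cardY2.
- rewrite /exchange_rank -/P -cardY1 -(cardsID A Y1) leq_subLR.
  exact: leq_add (subset_leq_card Y1A_sub) (subset_leq_card (setSD A sY1Y2)).
- by rewrite setDDr setDv set0U setIC setID.
Qed.

End ExchangeRank.

Local Open Scope ring_scope.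

Lemma card_set_cond (T : finType) (S : {set T}) (p : pred T) :
  #|[set x in S | p x]|%:Z = \sum_(x in S) Posz (p x).
Proof.
rewrite -sum1dep_card -natz natr_sum big_mkcondr /=.
by apply: eq_bigr => x _; case: (p x).
Qed.

Lemma sum_ord_leq (V i : nat) : (\sum_(j < V) (i <= j)%N)%N = (V - i)%N.
Proof.
elim: V => [|V IHV]; first by rewrite big_ord0.
by rewrite big_ord_recr /= IHV; case: (leqP i V) => /=; lia.
Qed.

Lemma sum_thresholds_le (n : nat) (x : int) : `|x| <= n%:Z ->
  \sum_(j < (2 * n).+1) Posz (x <= j%:Z - n%:Z)%R = n%:Z + 1 - x.
Proof.
rewrite ler_norml => /andP[xge xle].
have shift_le (j : 'I_(2 * n).+1) : (x <= j%:Z - n%:Z) = (absz (x + n%:Z)%R <= j)%N.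
  by apply/idP/idP; lia.
under eq_bigr do rewrite shift_le -natz.
by rewrite -natr_sum sum_ord_leq natz; lia.
Qed.

Lemma sum_thresholds_lt (n : nat) (x : int) : `|x| <= n%:Z ->
  \sum_(j < (2 * n).+1) Posz (x < j%:Z - n%:Z)%R = n%:Z - x.
Proof.
rewrite ler_norml => /andP[xge xle].
have shift_lt (j : 'I_(2 * n).+1) : (x < j%:Z - n%:Z) = ((absz (x + n%:Z)%R).+1 <= j)%N.
  by apply/idP/idP; lia.
under eq_bigr do rewrite shift_lt -natz.
by rewrite -natr_sum sum_ord_leq natz; lia.
Qed.

Lemma exists_sum_le_card_mul (I : finType) (F : I -> int) : (0 < #|I|)%N ->
  exists i, \sum_j F j <= #|I|%:Z * F i.
Proof.
case/card_gt0P => i0 _; have [i _ F_le] := @arg_maxP _ _ I i0 xpredT F isT.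
exists i; rewrite -natz mulr_natl -sumr_const.
by apply: ler_sum => j _; apply: F_le.
Qed.

Lemma exists_sumn_le_card_mul (I : finType) (F : I -> nat) : (0 < #|I|)%N ->
  exists i, (\sum_j F j <= #|I| * F i)%N.
Proof.
move=> /(exists_sum_le_card_mul (fun i => (F i)%:Z)) [i le_i]; exists i.
by rewrite -lez_nat PoszM -natz natr_sum; under eq_bigr do rewrite natz.
Qed.

Lemma bigcup_color_class (E K : finType) (col : E -> K) (S : {set E}) :
  \bigcup_c [set x in S | col x == c] = S.
Proof.
apply/setP => x; apply/bigcupP/idP => [[c _]|xS]; first by rewrite inE => /andP[].
by exists (col x); rewrite ?inE ?xS ?eqxx.
Qed.

Section MonochromaticExchange.

Variables (E : finType) (indep : pred {set E}) (A B : {set E}) (k : nat).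
Variables (K : finType) (col : E -> K) (val : E -> int).
Hypothesis matroidE : is_matroid indep.
Hypotheses (indepA : indep A) (indepB : indep B) (disjAB : [disjoint A & B]).
Hypotheses (cardA : #|A| = k) (cardB : #|B| = k).
Hypothesis K_gt0 : (0 < #|K|)%N.

Definition monochromatic_exchange (A' B' : {set E}) : Prop :=
  [/\ A' \subset A, B' \subset B,
      {in A' &, forall a a', col a = col a'} & {in B' &, forall b b', col b = col b'}] /\
  [/\ #|A'| = #|B'|, indep ((A :\: A') :|: B') &
      {in A' & B', forall a b, val b <= val a}].

(* In the truncation every superset of A has rank k, which makes
   [exchange_rank _ set0 _] vanish. *)
Let truncated := [pred X : {set E} | indep X && (#|X| <= k)%N].
Let truncatedE : is_matroid truncated := truncation_matroid k matroidE.
Let truncated_card_le X : truncated X -> (#|X| <= k)%N. Proof. by case/andP. Qed.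
Let truncatedA : truncated A. Proof. by rewrite /= indepA cardA leqnn. Qed.
Let truncatedB : truncated B. Proof. by rewrite /= indepB cardB leqnn. Qed.

Local Notation xrank := (exchange_rank truncated A).

Section Threshold.

Variable t : int.

Let Aup := [set a in A | t <= val a].
Let Blow := [set b in B | val b <= t].
Let Aup_col c := [set a in Aup | col a == c].
Let Blow_col c := [set b in Blow | col b == c].

Lemma card_threshold_le_color_sum :
  (#|Blow| <= \sum_c \sum_c' xrank (Aup_col c) (Blow_col c') + #|A :\: Aup|)%N.
Proof.
have truncatedBlow : truncated Blow.
  apply: (indep_subset truncatedE truncatedB).
  by apply/subsetP => b; rewrite inE => /andP[].
apply: leq_trans (card_le_exchange_rank truncatedE truncatedA Aup truncatedBlow) _.
rewrite leq_add2r -{1}(bigcup_color_class col Aup).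
apply: leq_trans
  (exchange_rank_bigcupl truncatedE truncated_card_le truncatedA cardA _ _) _.
apply: leq_sum => c _; rewrite -{1}(bigcup_color_class col Blow).
exact: exchange_rank_bigcupr truncatedE truncatedA cardA _ _ _.
Qed.

Lemma monochromatic_exchange_threshold : exists A' B',
  monochromatic_exchange A' B' /\
  (#|[set b in B | (val b <= t)%R]|
     <= #|K| ^ 2 * #|A'| + #|[set a in A | (val a < t)%R]|)%N.
Proof.
have [c le_c] := exists_sumn_le_card_mul
  (fun c => \sum_c' xrank (Aup_col c) (Blow_col c'))%N K_gt0.
have [c' le_c'] := exists_sumn_le_card_mul
  (fun c' => xrank (Aup_col c) (Blow_col c')) K_gt0.
have disjA_Blow : [disjoint A & Blow_col c'].
  by apply: disjointWr disjAB; apply/subsetP => b; rewrite !inE => /andP[/andP[->]].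
have [A' [B' [sA' sB' cardA'B' le_B' truncated']]] :=
  exchange_rank_realized truncatedE truncated_card_le truncatedA cardA
    (Aup_col c) disjA_Blow.
have memA' a : a \in A' -> [/\ a \in A, col a = c & t <= val a].
  by move/(subsetP sA'); rewrite !inE => /and3P[-> /andP[_ ->] /eqP].
have memB' b : b \in B' -> [/\ b \in B, col b = c' & val b <= t].
  by move/(subsetP sB'); rewrite !inE => /andP[/andP[-> ->] /eqP].
exists A', B'; split; [split; split|].
- by apply/subsetP => a /memA'[].
- by apply/subsetP => b /memB'[].
- by move=> a a' /memA'[_ -> _] /memA'[_ -> _].
- by move=> b b' /memB'[_ -> _] /memB'[_ -> _].
- exact: cardA'B'.
- by case/andP: truncated'.
- by move=> a b /memA'[_ _ le_a] /memB'[_ _ le_b]; apply: le_trans le_a.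
- have -> : [set a in A | val a < t] = A :\: Aup.
    by apply/setP => a; rewrite /Aup !inE ltNge; case: (a \in A); rewrite ?andbT.
  change (#|Blow| <= #|K| ^ 2 * #|A'| + #|A :\: Aup|)%N.
  apply: leq_trans card_threshold_le_color_sum _; rewrite leq_add2r.
  apply: leq_trans le_c _; rewrite expnS expn1 -mulnA leq_mul2l.
  by rewrite (leq_trans le_c') ?orbT // leq_mul2l cardA'B' le_B' orbT.
Qed.

End Threshold.

Lemma sum_threshold_gaps (n : nat) : (forall e, `|val e| <= n%:Z) ->
  \sum_(j < (2 * n).+1) (#|[set b in B | val b <= j%:Z - n%:Z]|%:Z
                         - #|[set a in A | val a < j%:Z - n%:Z]|%:Z)
  = k%:Z + \sum_(a in A) val a - \sum_(b in B) val b.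
Proof.
move=> val_le.
have countB : \sum_(j < (2 * n).+1) #|[set b in B | val b <= j%:Z - n%:Z]|%:Z
              = \sum_(b in B) (n%:Z + 1 - val b).
  under eq_bigr do rewrite card_set_cond.
  rewrite exchange_big; apply: eq_bigr => b _; exact: sum_thresholds_le (val_le b).
have countA : \sum_(j < (2 * n).+1) #|[set a in A | val a < j%:Z - n%:Z]|%:Z
              = \sum_(a in A) (n%:Z - val a).
  under eq_bigr do rewrite card_set_cond.
  rewrite exchange_big; apply: eq_bigr => a _; exact: sum_thresholds_lt (val_le a).
rewrite sumrB countB countA !sumrB !sumr_const cardA cardB mulrnDl natz.
by move: (n%:Z *+ k) (\sum_(a in A) val a) (\sum_(b in B) val b) => x y z; ring.
Qed.

Lemma monochromatic_exchange_average (n : nat) : (forall e, `|val e| <= n%:Z) ->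
  exists A' B', monochromatic_exchange A' B' /\
    k%:Z + \sum_(a in A) val a - \sum_(b in B) val b
      <= ((2 * n).+1 * #|K| ^ 2 * #|A'|)%N%:Z.
Proof.
move=> val_le; rewrite -(sum_threshold_gaps val_le).
have thresholds_gt0 : (0 < #|'I_(2 * n).+1|)%N by rewrite card_ord.
have [j le_j] := exists_sum_le_card_mul
  (fun j : 'I_(2 * n).+1 => #|[set b in B | val b <= j%:Z - n%:Z]|%:Z
                            - #|[set a in A | val a < j%:Z - n%:Z]|%:Z)
  thresholds_gt0.
have [A' [B' [exchange bound]]] := monochromatic_exchange_threshold (j%:Z - n%:Z).
exists A', B'; split=> //; apply: le_trans le_j _.
by rewrite card_ord -mulnA PoszM ler_wpM2l // lerBlDr -PoszD lez_nat.
Qed.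

End MonochromaticExchange.

Lemma norm1_ge0 (m : nat) (v : 'rV[int]_m) : 0 <= norm1 v.
Proof. by apply: sumr_ge0 => i _; apply: normr_ge0. Qed.

Lemma norm_entry_le_norm1 (m : nat) (v : 'rV[int]_m) i : `|v 0 i| <= norm1 v.
Proof.
by rewrite /norm1 (bigD1 i) //= lerDl; apply: sumr_ge0 => j _; apply: normr_ge0.
Qed.

Lemma norm_dotv_le (m : nat) (d x : 'rV[int]_m) (c : int) :
  (forall i, `|x 0 i| <= c) -> `|dotv d x| <= norm1 d * c.
Proof.
move=> x_le; apply: le_trans (ler_norm_sum _ _ _) _.
by rewrite /norm1 mulr_suml; apply: ler_sum => i _; rewrite normrM ler_wpM2l.
Qed.

Lemma dotv_ge_Nnorm1 (m : nat) (d x : 'rV[int]_m) : - (norm1 d * norm1 x) <= dotv d x.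
Proof.
by have := norm_dotv_le d (norm_entry_le_norm1 x); rewrite ler_norml => /andP[].
Qed.

Lemma dotvB (m : nat) (d x y : 'rV[int]_m) : dotv d (x - y) = dotv d x - dotv d y.
Proof. by rewrite /dotv -sumrB; apply: eq_bigr => i _; rewrite !mxE mulrBr. Qed.

Lemma dotv_wsum (E : finType) (m : nat) (W : E -> 'rV[int]_m) (S : {set E}) d :
  dotv d (wsum W S) = \sum_(e in S) dotv d (W e).
Proof.
rewrite /dotv /wsum exchange_big /=; apply: eq_bigr => i _.
by rewrite summxE mulr_sumr.
Qed.

Definition row_code (m Delta : nat) (v : 'rV[int]_m) :
  {ffun 'I_m -> 'I_(2 * Delta).+1} :=
  [ffun i => inord (absz (v 0 i + Delta%:Z))].

Lemma row_code_inj (m Delta : nat) (u v : 'rV[int]_m) :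
  (forall i, `|u 0 i| <= Delta%:Z) -> (forall i, `|v 0 i| <= Delta%:Z) ->
  row_code Delta u = row_code Delta v -> u = v.
Proof.
move=> u_le v_le /ffunP code_eq; apply/rowP => i.
have := code_eq i; rewrite !ffunE => /(congr1 val).
have := u_le i; have := v_le i; rewrite !ler_norml => /andP[? ?] /andP[? ?].
by rewrite /= !inordK; lia.
Qed.

Lemma unicolor_row_code (E : finType) (m Delta : nat) (W : E -> 'rV[int]_m)
    (S : {set E}) :
  (forall e i, `|W e 0 i| <= Delta%:Z) ->
  {in S &, forall a b, row_code Delta (W a) = row_code Delta (W b)} -> unicolor W S.
Proof. by move=> W_le code_eq a b aS bS; apply: row_code_inj (code_eq a b aS bS). Qed.

Lemma ler_divr_of_le_mul (R : realFieldType) (a b c r : R) :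
  0 < b -> b <= c -> 0 <= r -> a <= b * r -> a / c <= r.
Proof.
move=> b_gt0 b_le_c r_ge0 a_le; rewrite ler_pdivrMr ?(lt_le_trans b_gt0) //.
by rewrite mulrC; apply: le_trans a_le _; apply: ler_wpM2r.
Qed.

Lemma ratio_le_of_int_bound (R : realFieldType) (mu : R) (k r : nat) (D s V N : int) :
  0 <= D -> 1 <= V -> 0 < N -> s%:~R <= mu ->
  k%:Z - D * s <= V * N * r%:Z ->
  (k%:R - D%:~R * mu) / (V ^+ 2 * N)%:~R <= r%:R.
Proof.
move=> D_ge0 V_ge1 N_gt0 s_le_mu int_bound.
have V_gt0 : 0 < V := lt_le_trans ltr01 V_ge1.
apply: (@ler_divr_of_le_mul _ _ (V * N)%:~R); rewrite ?ler0n ?ltr0z ?mulr_gt0 //.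
  by rewrite ler_int expr2 -mulrA ler_peMl // ltW ?mulr_gt0.
rewrite !pmulrn -intrM; apply: le_trans (_ : _ <= (k%:Z - D * s)%:~R) _.
  by rewrite intrB intrM lerD2l lerN2 ler_wpM2l ?ler0z.
by rewrite ler_int.
Qed.

Theorem lemma12 (E : finType) (indep : pred {set E}) (m Delta : nat)
  (W : E -> 'rV[int]_m) (R : realFieldType) (mu : R)
  (A B : {set E}) (k : nat) (d : 'rV[int]_m) :
  is_matroid indep ->
  (0 < m)%N -> (0 < Delta)%N ->
  (forall e (i : 'I_m), `|W e 0 i| <= Delta%:Z) ->
  0 <= mu ->
  indep A -> indep B -> [disjoint A & B] ->
  #|A| = k -> #|B| = k ->
  (norm1 (wsum W A - wsum W B))%:~R <= mu ->
  exists A' B' : {set E},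
    [/\ A' \subset A, B' \subset B, unicolor W A' & unicolor W B'] /\
    [/\ #|A'| = #|B'|,
        indep ((A :\: A') :|: B'),
        (k%:R - (norm1 d)%:~R * mu)
          / (((2 * norm1 d * Delta%:Z + 1) ^+ 2 * (2 * Delta%:Z + 1) ^+ (2 * m))%:~R)
          <= (#|A'|%:R : R) &
        forall a b, a \in A' -> b \in B' -> dotv d (W a) >= dotv d (W b)].
Proof.
move=> matroidE _ _ W_le _ indepA indepB disjAB cardA cardB WAB_le_mu.
pose n := (absz (norm1 d) * Delta)%N.
have n_eq : n%:Z = norm1 d * Delta%:Z by rewrite PoszM gez0_abs ?norm1_ge0.
have val_le e : `|dotv d (W e)| <= n%:Z by rewrite n_eq; apply: norm_dotv_le.
have codes_gt0 : (0 < #|{ffun 'I_m -> 'I_(2 * Delta).+1}|)%N.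
  by apply/card_gt0P; exists [ffun => ord0].
have [A' [B' [[[sA' sB' colA' colB'] [cardA'B' indep' val_ge]] bound]]] :=
  monochromatic_exchange_average (row_code Delta \o W)
    matroidE indepA indepB disjAB cardA cardB codes_gt0 val_le.
exists A', B'; split; split=> //; try exact: unicolor_row_code.
have V_eq : ((2 * n).+1)%:Z = 2 * norm1 d * Delta%:Z + 1 by rewrite -mulrA -n_eq; lia.
have N2_eq :
    (#|{ffun 'I_m -> 'I_(2 * Delta).+1}| ^ 2)%N%:Z = (2 * Delta%:Z + 1) ^+ (2 * m).
  by rewrite card_ffun !card_ord -expnM mulnC -natz natrX natz; congr (_ ^+ _); lia.
apply: ratio_le_of_int_bound WAB_le_mu _; rewrite ?norm1_ge0 ?exprn_gt0 //.
- by rewrite lerDr !mulr_ge0 ?norm1_ge0.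
- by rewrite ltr_pwDr.
rewrite -V_eq -N2_eq -!PoszM; apply: le_trans bound.
by rewrite -!dotv_wsum -addrA lerD2l -dotvB dotv_ge_Nnorm1.
Qed.
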